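(* Let $f(u)=e^{g(u)}$ where $g\in C^3[0,\infty)$ satisfies $g'>0$, $g''>0$, $g'^2-g''\ge0$, $2g''^2-g'g'''>0$ on $[0,\infty)$. Then $\frac{h''(y)}{h'(y)}\le4$ for $y\ge-\log F(0)$.
   Context: $F(u)=\int_u^\infty\frac{ds}{f(s)}$, $\eta(y)=F^{-1}(e^{-y})$ for $y\ge-\log F(0)$ (with $F^{-1}$ the inverse of the decreasing function $F$), and $h(y)=1-f'(\eta(y))F(\eta(y))$. Under the hypotheses $h'(y)<0$ for $y\ge -\log F(0)$. *)

From Stdlib Require Import Reals.
From Coquelicot Require Import Coquelicot.
Open Scope R_scope.

(* [has_deriv_from a f f'] : on the closed half-line [a, +oo), f' is the derivative
   of f relative to [a, +oo): for every x >= a,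
   (f t - f x)/(t - x) -> f' x as t -> x with t >= a, t <> x.
   At interior points this is the ordinary derivative; at x = a it is the
   right derivative (as is standard for C^k[a,oo)). *)
Definition has_deriv_from (a : R) (f f' : R -> R) : Prop :=
  forall x, a <= x ->
    filterlim (fun t => (f t - f x) / (t - x))
      (within (fun t => a <= t /\ t <> x) (locally x)) (locally (f' x)).

Definition cont_from (a : R) (f : R -> R) : Prop :=
  forall x, a <= x ->
    filterlim f (within (fun t => a <= t) (locally x)) (locally (f x)).

Definition f_of (g : R -> R) (u : R) : R := exp (g u).

Definition F_of (g : R -> R) (u : R) : R :=
  RInt_gen (fun s => / f_of g s) (at_point u) (Rbar_locally p_infty).

From Stdlib Require Import Reals Lra Psatz.
From Coquelicot Require Import Coquelicot.
Open Scope R_scope.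

(* Change variables by y = -ln F(u), i.e. u = eta(y), and let phi = F/f = e^g F.
   Then dy/du = 1/phi, phi' = g' phi - 1 and h(y) = 1 - g'(u) phi(u), so by the
   chain rule h'(y) = phi (g' - (g'' + g'^2) phi) and h''(y) = phi d/du[h'(y)].
   As h' < 0, the bound h''/h' <= 4 becomes a polynomial inequality in g', g'',
   g''' and phi, which holds because g lies above its tangents: this gives
   F(u) <= e^(-g u) / g'(u), that is g' phi <= 1. *)

(** * Derivatives relative to a closed half-line *)

Lemma locally_Rabs (x : R) (P : R -> Prop) :
  locally x P <-> exists e, 0 < e /\ forall y, Rabs (y - x) < e -> P y.
Proof.
  split.
  - intros [e He]. exists e. split; [apply cond_pos | exact He].
  - intros [e [e_pos He]]. exists (mkposreal e e_pos). exact He.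
Qed.

Lemma filterlim_plus_fun {T} (F : (T -> Prop) -> Prop) {FF : Filter F}
  (f g : T -> R) (a b : R) :
  filterlim f F (locally a) -> filterlim g F (locally b) ->
  filterlim (fun t => f t + g t) F (locally (a + b)).
Proof.
  intros Hf Hg. exact (filterlim_comp_2 _ _ (fun x y => plus x y) Hf Hg (filterlim_plus a b)).
Qed.

Lemma filterlim_mult_fun {T} (F : (T -> Prop) -> Prop) {FF : Filter F}
  (f g : T -> R) (a b : R) :
  filterlim f F (locally a) -> filterlim g F (locally b) ->
  filterlim (fun t => f t * g t) F (locally (a * b)).
Proof.
  intros Hf Hg. exact (filterlim_comp_2 _ _ (fun x y => mult x y) Hf Hg (filterlim_mult a b)).
Qed.

Definition locally_from (a x : R) : (R -> Prop) -> Prop := within (fun t => a <= t) (locally x).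

Definition punctured_from (a x : R) : (R -> Prop) -> Prop :=
  within (fun t => a <= t /\ t <> x) (locally x).

Lemma locally_from_filter (a x : R) : Filter (locally_from a x).
Proof. apply within_filter, locally_filter. Qed.

#[local] Hint Resolve locally_from_filter : core.

Lemma punctured_from_proper (a x : R) : a <= x -> ProperFilter' (punctured_from a x).
Proof.
  intros Hax. constructor.
  - intros H. apply locally_Rabs in H as [e [e_pos H]].
    apply (H (x + e / 2)); [rewrite Rabs_right|]; lra.
  - apply within_filter, locally_filter.
Qed.

Lemma punctured_from_le (a x : R) : filter_le (punctured_from a x) (locally_from a x).
Proof.
  intros P. unfold locally_from, punctured_from, within. apply filter_imp.
  intros t H [Ht _]. auto.
Qed.

Lemma filterlim_id_locally_from (a x : R) :
  filterlim (fun t => t) (locally_from a x) (locally x).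
Proof.
  apply (filterlim_filter_le_1 (F := locally x)); [apply filter_le_within | apply filterlim_id].
Qed.

(* Carathéodory's form of the derivative relative to [a, +oo): unlike
   [has_deriv_from] it is stable under products and compositions by plain
   algebra on the slopes, and it makes sense at the endpoint [a]. *)
Definition is_derive_from (a : R) (f : R -> R) (x l : R) : Prop :=
  exists q, (forall t, a <= t -> f t - f x = q t * (t - x)) /\
    filterlim q (locally_from a x) (locally l).

Definition slope (f : R -> R) (x l t : R) : R :=
  if Req_dec_T t x then l else (f t - f x) / (t - x).

Lemma slope_spec (f : R -> R) (x l t : R) : f t - f x = slope f x l t * (t - x).
Proof. unfold slope. destruct (Req_dec_T t x) as [->|Htx]; [ring | field; lra]. Qed.

Lemma derivable_pt_lim_slope (f : R -> R) (x l : R) :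
  derivable_pt_lim f x l -> filterlim (slope f x l) (locally x) (locally l).
Proof.
  intros Hf P HP. apply locally_Rabs in HP as [e [e_pos HP]].
  destruct (Hf e e_pos) as [d Hd]. apply locally_Rabs. exists d. split; [apply cond_pos|].
  intros t Ht. apply HP. unfold slope. destruct (Req_dec_T t x) as [_|Htx].
  - rewrite Rminus_eq_0, Rabs_R0. exact e_pos.
  - specialize (Hd (t - x)). replace (x + (t - x)) with t in Hd by ring. apply Hd; lra.
Qed.

Lemma has_deriv_from_is_derive_from (a : R) (f f' : R -> R) (x : R) :
  has_deriv_from a f f' -> a <= x -> is_derive_from a f x (f' x).
Proof.
  intros Hf Hx. exists (slope f x (f' x)). split; [intros; apply slope_spec|].
  intros P HP. specialize (Hf x Hx P HP).
  apply locally_Rabs in Hf as [e [e_pos Hf]]. apply locally_Rabs. exists e. split; [exact e_pos|].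
  intros t Ht Hat. unfold slope. destruct (Req_dec_T t x) as [_|Htx].
  - apply locally_singleton. exact HP.
  - apply Hf; auto.
Qed.

Lemma derivable_pt_lim_is_derive_from (a : R) (f : R -> R) (x l : R) :
  derivable_pt_lim f x l -> is_derive_from a f x l.
Proof.
  intros Hf. exists (slope f x l). split; [intros; apply slope_spec|].
  intros P HP. apply filter_le_within, (derivable_pt_lim_slope f x l Hf P HP).
Qed.

Lemma is_derive_from_unique (a : R) (f f' : R -> R) (x l : R) :
  has_deriv_from a f f' -> a <= x -> is_derive_from a f x l -> f' x = l.
Proof.
  intros Hf Hx [s [Hs s_lim]].
  assert (PF := punctured_from_proper a x Hx).
  apply (filterlim_locally_unique (F := punctured_from a x) (fun t => (f t - f x) / (t - x)));
    [exact (Hf x Hx)|].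
  apply filterlim_ext_loc with s.
  - unfold punctured_from, within. apply filter_forall. intros t [Ht Htx].
    rewrite Hs by exact Ht. field. lra.
  - intros P HP. apply punctured_from_le, s_lim, HP.
Qed.

Lemma is_derive_from_continuous (a : R) (f : R -> R) (x l : R) :
  is_derive_from a f x l -> filterlim f (locally_from a x) (locally (f x)).
Proof.
  intros [s [Hs s_lim]].
  apply filterlim_ext_loc with (fun t => f x + s t * (t - x)).
  - unfold locally_from, within. apply filter_forall. intros t Ht. rewrite <- Hs by exact Ht. ring.
  - assert (Hlim : filterlim (fun t => f x + s t * (t - x)) (locally_from a x)
                      (locally (f x + l * (x - x)))).
    { apply filterlim_plus_fun; [auto | apply filterlim_const |].
      apply filterlim_mult_fun; [auto | exact s_lim |].
      apply filterlim_plus_fun; [auto | apply filterlim_id_locally_from | apply filterlim_const]. }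
    replace (f x + l * (x - x)) with (f x) in Hlim by ring. exact Hlim.
Qed.

Lemma is_derive_from_derivable_pt_lim (a : R) (f : R -> R) (x l : R) :
  a < x -> is_derive_from a f x l -> derivable_pt_lim f x l.
Proof.
  intros Hax [s [Hs s_lim]] e e_pos.
  assert (Hball : locally l (fun z => Rabs (z - l) < e)).
  { apply locally_Rabs. exists e. auto. }
  specialize (s_lim _ Hball). apply locally_Rabs in s_lim as [d [d_pos Hd]].
  assert (Hm : 0 < Rmin d (x - a)) by (apply Rmin_pos; lra).
  exists (mkposreal _ Hm). intros t Ht0 Ht. simpl in Ht.
  assert (Hd1 := Rmin_l d (x - a)). assert (Hd2 := Rmin_r d (x - a)).
  assert (Hat : a <= x + t) by (apply Rabs_def2 in Ht; lra).
  rewrite Hs by exact Hat.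
  replace (s (x + t) * (x + t - x) / t) with (s (x + t)) by (field; exact Ht0).
  apply Hd; [replace (x + t - x) with t by ring; lra | exact Hat].
Qed.

Lemma is_derive_from_ext (a : R) (f g : R -> R) (x l : R) :
  (forall t, a <= t -> f t = g t) -> a <= x ->
  is_derive_from a f x l -> is_derive_from a g x l.
Proof.
  intros Hfg Hx [s [Hs s_lim]]. exists s. split; [|exact s_lim].
  intros t Ht. rewrite <- !Hfg by assumption. auto.
Qed.

Lemma is_derive_from_eq_deriv (a : R) (f : R -> R) (x l l' : R) :
  l = l' -> is_derive_from a f x l -> is_derive_from a f x l'.
Proof. intros <-. auto. Qed.

Lemma is_derive_from_const (a c x : R) : is_derive_from a (fun _ => c) x 0.
Proof. exists (fun _ => 0). split; [intros; ring | apply filterlim_const]. Qed.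

Lemma is_derive_from_id (a x : R) : is_derive_from a (fun t => t) x 1.
Proof. exists (fun _ => 1). split; [intros; ring | apply filterlim_const]. Qed.

Lemma is_derive_from_plus (a : R) (f g : R -> R) (x df dg : R) :
  is_derive_from a f x df -> is_derive_from a g x dg ->
  is_derive_from a (fun t => f t + g t) x (df + dg).
Proof.
  intros [p [Hp p_lim]] [q [Hq q_lim]]. exists (fun t => p t + q t). split.
  - intros t Ht. rewrite Rmult_plus_distr_r, <- Hp, <- Hq by exact Ht. ring.
  - apply filterlim_plus_fun; auto.
Qed.

Lemma is_derive_from_opp (a : R) (f : R -> R) (x df : R) :
  is_derive_from a f x df -> is_derive_from a (fun t => - f t) x (- df).
Proof.
  intros [p [Hp p_lim]]. exists (fun t => -1 * p t). split.
  - intros t Ht. rewrite Rmult_assoc, <- Hp by exact Ht. ring.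
  - replace (- df) with (-1 * df) by ring. apply filterlim_mult_fun; auto using filterlim_const.
Qed.

Lemma is_derive_from_minus (a : R) (f g : R -> R) (x df dg : R) :
  is_derive_from a f x df -> is_derive_from a g x dg ->
  is_derive_from a (fun t => f t - g t) x (df - dg).
Proof.
  intros Hf Hg. exact (is_derive_from_plus _ _ _ _ _ _ Hf (is_derive_from_opp _ _ _ _ Hg)).
Qed.

Lemma is_derive_from_mult (a : R) (f g : R -> R) (x df dg : R) :
  is_derive_from a f x df -> is_derive_from a g x dg ->
  is_derive_from a (fun t => f t * g t) x (df * g x + f x * dg).
Proof.
  intros Hf Hg. assert (g_cont := is_derive_from_continuous _ _ _ _ Hg).
  destruct Hf as [p [Hp p_lim]], Hg as [q [Hq q_lim]].
  exists (fun t => p t * g t + f x * q t). split.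
  - intros t Ht.
    replace ((p t * g t + f x * q t) * (t - x))
      with (p t * (t - x) * g t + f x * (q t * (t - x))) by ring.
    rewrite <- Hp, <- Hq by exact Ht. ring.
  - apply filterlim_plus_fun; auto; apply filterlim_mult_fun; auto using filterlim_const.
Qed.

Lemma is_derive_from_comp (a : R) (phi f : R -> R) (x dphi df : R) :
  derivable_pt_lim phi (f x) dphi -> is_derive_from a f x df ->
  is_derive_from a (fun t => phi (f t)) x (dphi * df).
Proof.
  intros Hphi Hf. assert (f_cont := is_derive_from_continuous _ _ _ _ Hf).
  destruct Hf as [p [Hp p_lim]].
  exists (fun t => slope phi (f x) dphi (f t) * p t). split.
  - intros t Ht. rewrite slope_spec with (l := dphi), Hp by exact Ht. ring.
  - apply filterlim_mult_fun; auto.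
    exact (filterlim_comp _ _ _ f _ _ _ _ f_cont (derivable_pt_lim_slope _ _ _ Hphi)).
Qed.

Lemma is_derive_from_nondecreasing (a : R) (f d : R -> R) (u s : R) :
  a <= u -> u <= s -> (forall x, a <= x -> is_derive_from a f x (d x)) ->
  (forall x, u <= x <= s -> 0 <= d x) -> f u <= f s.
Proof.
  intros Hau Hus Hf Hd. destruct (Req_dec u s) as [<-|Hne]; [lra|].
  assert (inner : forall t, u < t < s -> f t <= f s).
  { intros t Ht. destruct (MVT_cor2 f d t s) as [c [Hc Htc]]; [lra| |].
    - intros c Hc. apply is_derive_from_derivable_pt_lim with a; [|apply Hf]; lra.
    - assert (0 <= d c) by (apply Hd; lra). nra. }
  assert (PF := punctured_from_proper u u (Rle_refl u)).
  assert (f_lim : filterlim f (punctured_from u u) (locally (f u))).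
  { intros P HP. specialize (is_derive_from_continuous _ _ _ _ (Hf u Hau) P HP).
    unfold filtermap, locally_from, punctured_from, within. apply filter_imp.
    intros t Ht [Hut _]. apply Ht. lra. }
  change (Rbar_le (f u) (f s)).
  apply (filterlim_le (F := punctured_from u u) f (fun _ => f s));
    [| exact f_lim | apply filterlim_const].
  apply locally_Rabs. exists (s - u). split; [lra|]. intros t Ht [Hut Htu].
  apply inner. apply Rabs_def2 in Ht. lra.
Qed.

Lemma has_deriv_from_chain (Y h h' H : R -> R) (a b x dY dH : R) :
  a <= x -> (forall t, a <= t -> b <= Y t) ->
  (forall s t, a <= s -> s < t -> Y s < Y t) ->
  has_deriv_from b h h' -> (forall t, a <= t -> h (Y t) = H t) ->
  is_derive_from a Y x dY -> is_derive_from a H x dH -> h' (Y x) * dY = dH.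
Proof.
  intros Hx Y_ge Y_incr Hh HY HdY HdH.
  assert (Y_neq : forall t, a <= t -> t <> x -> Y t <> Y x).
  { intros t Ht Htx. destruct (Rlt_or_le t x).
    - apply Rlt_not_eq, Y_incr; lra.
    - apply Rgt_not_eq, Y_incr; lra. }
  assert (Y_lim : filterlim Y (punctured_from a x) (punctured_from b (Y x))).
  { intros P HP. specialize (is_derive_from_continuous _ _ _ _ HdY _ HP).
    unfold filtermap, locally_from, punctured_from, within. apply filter_imp.
    intros t Ht [Hat Htx]. apply Ht; auto. }
  destruct HdY as [p [Hp p_lim]], HdH as [q [Hq q_lim]].
  assert (PF := punctured_from_proper a x Hx).
  apply (filterlim_locally_unique (F := punctured_from a x) q).
  - apply filterlim_ext_loc with (fun t => (h (Y t) - h (Y x)) / (Y t - Y x) * p t).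
    + unfold punctured_from, within. apply filter_forall. intros t [Hat Htx].
      assert (HYt := Y_neq t Hat Htx).
      apply Rmult_eq_reg_r with (t - x); [|lra].
      rewrite <- Hq, !HY, Rmult_assoc, <- Hp by assumption. field. lra.
    + apply filterlim_mult_fun; [apply within_filter, locally_filter| |].
      * exact (filterlim_comp _ _ _ _ _ _ _ _ Y_lim (Hh (Y x) (Y_ge x Hx))).
      * intros P HP. apply punctured_from_le, p_lim, HP.
  - intros P HP. apply punctured_from_le, q_lim, HP.
Qed.

(** * The tail integral F *)

Lemma g_above_tangent (g g1 g2 : R -> R) :
  has_deriv_from 0 g g1 -> has_deriv_from 0 g1 g2 -> (forall u, 0 <= u -> 0 < g2 u) ->
  forall u s, 0 <= u -> u <= s -> g u + g1 u * (s - u) <= g s.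
Proof.
  intros Hg1 Hg2 g2_pos u s Hu Hus.
  assert (g1_incr : forall x y, 0 <= x -> x <= y -> g1 x <= g1 y).
  { intros x y Hx Hxy. apply (is_derive_from_nondecreasing 0 g1 g2); auto.
    - intros z Hz. apply has_deriv_from_is_derive_from; auto.
    - intros z Hz. left. apply g2_pos. lra. }
  enough (g u - g1 u * u <= g s - g1 u * s) by lra.
  apply (is_derive_from_nondecreasing 0 (fun t => g t - g1 u * t) (fun t => g1 t - g1 u)); auto.
  - intros x Hx. eapply is_derive_from_eq_deriv; [|apply is_derive_from_minus;
      [apply has_deriv_from_is_derive_from; eauto
      | apply is_derive_from_mult; [apply is_derive_from_const | apply is_derive_from_id]]].
    cbv beta; ring.
  - intros x Hx. assert (g1 u <= g1 x) by (apply g1_incr; lra). lra.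
Qed.

Lemma continuous_Rmax0 (phi : R -> R) :
  (forall x, 0 <= x -> filterlim phi (locally_from 0 x) (locally (phi x))) ->
  forall x, continuous (fun s => phi (Rmax 0 s)) x.
Proof.
  intros Hphi x.
  apply (filterlim_comp _ _ _ (fun s => Rmax 0 s) phi _ (locally_from 0 (Rmax 0 x)));
    [|apply Hphi, Rmax_l].
  intros P HP. apply locally_Rabs in HP as [e [e_pos HP]].
  apply locally_Rabs. exists e. split; [exact e_pos|]. intros y Hy. apply HP; [|apply Rmax_l].
  apply Rabs_def2 in Hy. apply Rabs_def1; unfold Rmax;
    destruct (Rle_dec 0 y), (Rle_dec 0 x); lra.
Qed.

Lemma is_lub_incr_lim (I : R -> R) (c l : R) :
  (forall s t, c <= s -> s <= t -> I s <= I t) ->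
  is_lub (fun y => exists b, c <= b /\ y = I b) l ->
  filterlim I (Rbar_locally p_infty) (locally l).
Proof.
  intros I_incr [l_ub l_least] P HP. apply locally_Rabs in HP as [e [e_pos HP]].
  assert (Hb0 : exists b0, c <= b0 /\ l - e < I b0).
  { apply Classical_Prop.NNPP. intros Hn.
    enough (l <= l - e) by lra.
    apply l_least. intros y [b [Hb ->]].
    apply Rnot_lt_le. intros Hlt. apply Hn. eauto. }
  destruct Hb0 as [b0 [Hb0 Hlt]]. exists b0. intros x Hx. apply HP.
  assert (I b0 <= I x) by (apply I_incr; lra).
  assert (I x <= l) by (apply l_ub; exists x; split; [lra | reflexivity]).
  apply Rabs_def1; lra.
Qed.

Lemma is_RInt_gen_p_infty (f : R -> R) (a l : R) :
  (forall b, ex_RInt f a b) -> filterlim (RInt f a) (Rbar_locally p_infty) (locally l) ->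
  is_RInt_gen f (at_point a) (Rbar_locally p_infty) l.
Proof.
  intros f_int Hlim P HP. destruct (Hlim P HP) as [M HM].
  apply Filter_prod with (fun x => x = a) (fun b => M < b).
  - reflexivity.
  - exists M. auto.
  - intros x b -> Hb. exists (RInt f a b). split; [|apply HM, Hb].
    apply (RInt_correct (V := R_CompleteNormedModule)), f_int.
Qed.

Lemma exp_le (x y : R) : x <= y -> exp x <= exp y.
Proof. intros [Hxy| ->]; [left; apply exp_increasing, Hxy | right; reflexivity]. Qed.

Lemma is_RInt_exp_decay (c p u b : R) : p <> 0 ->
  is_RInt (fun s => c * exp (- p * (s - u))) u b (c / p * (1 - exp (- p * (b - u)))).
Proof.
  intros Hp.
  replace (c / p * (1 - exp (- p * (b - u))))
    with (minus (- (c / p) * exp (- p * (b - u))) (- (c / p) * exp (- p * (u - u)))).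
  - apply (is_RInt_derive (fun s => - (c / p) * exp (- p * (s - u)))).
    + intros x _. auto_derive; [auto|]. rewrite <- Rminus_def. field. exact Hp.
    + intros x _. apply (ex_derive_continuous (V := R_NormedModule)). auto_derive. auto.
  - unfold minus, plus, opp. simpl. rewrite Rminus_eq_0, Rmult_0_r, exp_0. field. exact Hp.
Qed.

(* Equal to [/ f_of g] on [0, +oo), and continuous on all of [R] as soon as [g]
   is continuous on [0, +oo), which is what the integrability lemmas need. *)
Definition tail_integrand (g : R -> R) (s : R) : R := / exp (g (Rmax 0 s)).

Definition F_over_f (g : R -> R) (u : R) : R := exp (g u) * F_of g u.

Section Tail_integral.

Variables g g1 : R -> R.
Hypothesis g_deriv : has_deriv_from 0 g g1.
Hypothesis g1_pos : forall u, 0 <= u -> 0 < g1 u.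
Hypothesis g_tangent : forall u s, 0 <= u -> u <= s -> g u + g1 u * (s - u) <= g s.

Let k := tail_integrand g.

Lemma tail_integrand_continuous (x : R) : continuous k x.
Proof.
  apply (continuous_comp (fun s => g (Rmax 0 s)) (fun z => / exp z)).
  - apply continuous_Rmax0. intros y Hy.
    apply (is_derive_from_continuous _ _ _ (g1 y)), has_deriv_from_is_derive_from; auto.
  - apply (ex_derive_continuous (V := R_NormedModule) (fun z => / exp z)).
    auto_derive. apply Rgt_not_eq, exp_pos.
Qed.

Lemma ex_RInt_tail_integrand (a b : R) : ex_RInt k a b.
Proof.
  apply (ex_RInt_continuous (V := R_CompleteNormedModule)).
  intros; apply tail_integrand_continuous.
Qed.

Lemma RInt_tail_integrand_Chasles (a b c : R) : RInt k a b + RInt k b c = RInt k a c.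
Proof. apply (RInt_Chasles (V := R_CompleteNormedModule)); apply ex_RInt_tail_integrand. Qed.

Lemma RInt_tail_integrand_pos (a b : R) : a < b -> 0 < RInt k a b.
Proof.
  intros Hab. apply RInt_gt_0; [exact Hab | |].
  - intros. apply Rinv_0_lt_compat, exp_pos.
  - intros. apply tail_integrand_continuous.
Qed.

Lemma RInt_tail_integrand_incr (u b c : R) : u <= b -> b <= c -> RInt k u b <= RInt k u c.
Proof.
  intros Hub Hbc. rewrite <- (RInt_tail_integrand_Chasles u b c).
  destruct (Req_dec b c) as [<-|Hne].
  - rewrite RInt_point. unfold zero. simpl. lra.
  - assert (0 < RInt k b c) by (apply RInt_tail_integrand_pos; lra). lra.
Qed.

Lemma RInt_tail_integrand_le (u b : R) : 0 <= u -> u <= b -> RInt k u b <= / exp (g u) / g1 u.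
Proof.
  intros Hu Hub. assert (Hp := g1_pos u Hu).
  apply Rle_trans with (RInt (fun s => / exp (g u) * exp (- g1 u * (s - u))) u b).
  - apply RInt_le; [exact Hub | apply ex_RInt_tail_integrand | |].
    + eexists. apply is_RInt_exp_decay. lra.
    + intros s Hs. unfold k, tail_integrand. rewrite Rmax_right by lra.
      rewrite <- !exp_Ropp, <- exp_plus. apply exp_le.
      assert (Htan := g_tangent u s Hu ltac:(lra)). lra.
  - rewrite (is_RInt_unique _ _ _ _
               (is_RInt_exp_decay (/ exp (g u)) (g1 u) u b (Rgt_not_eq _ _ Hp))).
    assert (0 < exp (- g1 u * (b - u))) by apply exp_pos.
    assert (0 < / exp (g u) / g1 u)
      by (apply Rdiv_lt_0_compat; [apply Rinv_0_lt_compat, exp_pos | exact Hp]).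
    unfold Rdiv in *. nra.
Qed.

Lemma F_of_tail_limit : exists l, forall u, 0 <= u ->
  F_of g u = l - RInt k 0 u /\
  filterlim (RInt k u) (Rbar_locally p_infty) (locally (F_of g u)).
Proof.
  set (E := fun y => exists b, 0 <= b /\ y = RInt k 0 b).
  destruct (completeness E) as [l l_lub].
  { exists (/ exp (g 0) / g1 0). intros y [b [Hb ->]]. apply RInt_tail_integrand_le; lra. }
  { exists (RInt k 0 0). exists 0. split; [lra | reflexivity]. }
  assert (lim0 := is_lub_incr_lim (RInt k 0) 0 l
                    (fun s t Hs Hst => RInt_tail_integrand_incr 0 s t Hs Hst) l_lub).
  exists l. intros u Hu.
  assert (limu : filterlim (RInt k u) (Rbar_locally p_infty) (locally (l - RInt k 0 u))).
  { apply filterlim_ext with (fun b => RInt k 0 b + - RInt k 0 u).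
    - intros b. rewrite <- (RInt_tail_integrand_Chasles 0 u b). ring.
    - apply filterlim_plus_fun; [apply Rbar_locally_filter | exact lim0 | apply filterlim_const]. }
  enough (HF : F_of g u = l - RInt k 0 u) by (rewrite HF; auto).
  apply is_RInt_gen_unique.
  apply (is_RInt_gen_ext k);
    [| apply is_RInt_gen_p_infty; [apply ex_RInt_tail_integrand | exact limu]].
  apply Filter_prod with (fun a => a = u) (fun b => u < b); [reflexivity | exists u; auto |].
  intros a b -> Hb x Hx. simpl in Hx. rewrite Rmin_left, Rmax_right in Hx by lra.
  unfold k, tail_integrand, f_of. rewrite Rmax_right by lra. reflexivity.
Qed.

Lemma F_of_pos (u : R) : 0 <= u -> 0 < F_of g u.
Proof.
  intros Hu. destruct F_of_tail_limit as [l Hl]. destruct (Hl u Hu) as [_ Hlim].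
  apply Rlt_le_trans with (RInt k u (u + 1)); [apply RInt_tail_integrand_pos; lra|].
  change (Rbar_le (RInt k u (u + 1)) (F_of g u)).
  apply (filterlim_le (F := Rbar_locally p_infty) (fun _ => RInt k u (u + 1)) (RInt k u));
    [| apply filterlim_const | exact Hlim].
  exists (u + 1). intros b Hb. apply RInt_tail_integrand_incr; lra.
Qed.

Lemma F_over_f_pos (u : R) : 0 <= u -> 0 < F_over_f g u.
Proof. intros Hu. apply Rmult_lt_0_compat; [apply exp_pos | apply F_of_pos, Hu]. Qed.

Lemma g1_F_over_f_le_1 (u : R) : 0 <= u -> g1 u * F_over_f g u <= 1.
Proof.
  intros Hu. destruct F_of_tail_limit as [l Hl]. destruct (Hl u Hu) as [_ Hlim].
  assert (Hle : F_of g u <= / exp (g u) / g1 u).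
  { change (Rbar_le (F_of g u) (/ exp (g u) / g1 u)).
    apply (filterlim_le (F := Rbar_locally p_infty) (RInt k u) (fun _ => / exp (g u) / g1 u));
      [| exact Hlim | apply filterlim_const].
    exists u. intros b Hb. apply RInt_tail_integrand_le; lra. }
  assert (Hp := g1_pos u Hu). assert (He := exp_pos (g u)). unfold F_over_f.
  apply Rmult_le_compat_l with (r := g1 u * exp (g u)) in Hle; [|nra].
  replace (g1 u * exp (g u) * (/ exp (g u) / g1 u)) with 1 in Hle by (field; lra). lra.
Qed.

Lemma F_of_decr (u t : R) : 0 <= u -> u < t -> F_of g t < F_of g u.
Proof.
  intros Hu Hut. destruct F_of_tail_limit as [l Hl].
  rewrite (proj1 (Hl u Hu)), (proj1 (Hl t ltac:(lra))).
  rewrite <- (RInt_tail_integrand_Chasles 0 u t).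
  assert (0 < RInt k u t) by (apply RInt_tail_integrand_pos; exact Hut). lra.
Qed.

Lemma F_of_derive (u : R) : 0 <= u -> is_derive_from 0 (F_of g) u (- / exp (g u)).
Proof.
  intros Hu. destruct F_of_tail_limit as [l Hl].
  apply is_derive_from_ext with (fun v => l - RInt k 0 v);
    [intros t Ht; symmetry; apply Hl, Ht | exact Hu |].
  apply derivable_pt_lim_is_derive_from.
  replace (- / exp (g u)) with (0 - k u)
    by (unfold k, tail_integrand; rewrite Rmax_right by lra; ring).
  apply (derivable_pt_lim_minus (fun _ => l) (RInt k 0)); [apply derivable_pt_lim_const|].
  apply is_derive_Reals, (is_derive_RInt (V := R_NormedModule) k (RInt k 0) 0 u).
  - apply filter_forall. intros b.
    apply (RInt_correct (V := R_CompleteNormedModule)), ex_RInt_tail_integrand.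
  - apply tail_integrand_continuous.
Qed.

End Tail_integral.

(** * The polynomial inequality *)

(* For p, q, r the values of g', g'', g''' at u and x = e^(g u) F(u), these are the
   derivatives in u of h(y) and of h'(y) along y = -ln F(u). *)
Definition h_du (p q x : R) : R := p - (q + p ^ 2) * x.

Definition h1_du (p q r x : R) : R :=
  (p * x - 1) * h_du p q x + x * (q - (r + 2 * p * q) * x - (q + p ^ 2) * (p * x - 1)).

Lemma h1_du_ge_4_h_du (p q r x : R) :
  0 < p -> 0 < q -> 0 <= p ^ 2 - q -> 0 < 2 * q ^ 2 - p * r -> 0 < x -> p * x <= 1 ->
  h_du p q x < 0 -> 4 * h_du p q x <= h1_du p q r x.
Proof.
  intros Hp Hq Hqp Hr Hx Hpx Hneg.
  set (A := r + 4 * p * q + 2 * p ^ 3).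
  set (Q := - A * x ^ 2 + 7 * (q + p ^ 2) * x - 5 * p).
  assert (Q_eq : h1_du p q r x - 4 * h_du p q x = Q) by (unfold h1_du, h_du, Q, A; ring).
  enough (0 <= Q) by lra.
  unfold h_du in Hneg.
  assert (Hd : 0 < (q + p ^ 2) * x - p) by lra.
  destruct (Rle_or_lt 0 A) as [HA|HA].
  - assert (certificate : p * (q + p ^ 2) * q * Q =
        p ^ 2 * (2 * q ^ 2 - p * r) * (1 - p * x)
      + (q + p ^ 2) * (3 * p * q - r) * ((q + p ^ 2) * x - p)
      + q * A * ((q + p ^ 2) * x - p) * (1 - p * x)) by (unfold Q, A; ring).
    assert (0 < 3 * p * q - r).
    { assert (p * (3 * p * q - r) > 0) by nra. nra. }
    assert (0 <= p ^ 2 * (2 * q ^ 2 - p * r) * (1 - p * x))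
      by (apply Rmult_le_pos; [apply Rmult_le_pos|]; nra).
    assert (0 <= (q + p ^ 2) * (3 * p * q - r) * ((q + p ^ 2) * x - p))
      by (apply Rmult_le_pos; [apply Rmult_le_pos|]; nra).
    assert (0 <= q * A * ((q + p ^ 2) * x - p) * (1 - p * x))
      by (repeat apply Rmult_le_pos; lra).
    assert (0 < p * (q + p ^ 2) * q) by (repeat apply Rmult_lt_0_compat; nra).
    nra.
  - assert (certificate : (q + p ^ 2) ^ 2 * Q = p * (2 * q ^ 2 - p * r)
      + ((q + p ^ 2) * x - p) * (- A * ((q + p ^ 2) * x + p) + 7 * (q + p ^ 2) ^ 2))
      by (unfold Q, A; ring).
    assert (0 <= ((q + p ^ 2) * x - p) * (- A * ((q + p ^ 2) * x + p) + 7 * (q + p ^ 2) ^ 2))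
      by (apply Rmult_le_pos; nra).
    assert (0 < (q + p ^ 2) ^ 2) by nra.
    nra.
Qed.

Lemma h_ratio_le_4 (p q r x : R) :
  0 < p -> 0 < q -> 0 <= p ^ 2 - q -> 0 < 2 * q ^ 2 - p * r -> 0 < x -> p * x <= 1 ->
  x * h_du p q x < 0 -> x * h1_du p q r x / (x * h_du p q x) <= 4.
Proof.
  intros Hp Hq Hqp Hr Hx Hpx Hneg.
  assert (Hh : h_du p q x < 0) by nra.
  assert (H4 := h1_du_ge_4_h_du p q r x Hp Hq Hqp Hr Hx Hpx Hh).
  apply Rmult_le_reg_r with (- (x * h_du p q x)); [lra|].
  replace (x * h1_du p q r x / (x * h_du p q x) * - (x * h_du p q x))
    with (- (x * h1_du p q r x)) by (field; nra).
  nra.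
Qed.

(** * The change of variables y = -ln F(u) *)

Section Reparametrization.

Variables g g1 g2 g3 : R -> R.
Hypothesis g_deriv : has_deriv_from 0 g g1.
Hypothesis g1_deriv : has_deriv_from 0 g1 g2.
Hypothesis g2_deriv : has_deriv_from 0 g2 g3.
Hypothesis g1_pos : forall u, 0 <= u -> 0 < g1 u.
Hypothesis g2_pos : forall u, 0 <= u -> 0 < g2 u.

Let g_tangent := g_above_tangent g g1 g2 g_deriv g1_deriv g2_pos.
Let F_pos := F_of_pos g g1 g_deriv g1_pos g_tangent.
Let F_decr := F_of_decr g g1 g_deriv g1_pos g_tangent.
Let F_derive := F_of_derive g g1 g_deriv g1_pos g_tangent.
Let F_over_f_gt0 := F_over_f_pos g g1 g_deriv g1_pos g_tangent.

Definition eta_inv (u : R) : R := - ln (F_of g u).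

Lemma eta_inv_incr (s t : R) : 0 <= s -> s < t -> eta_inv s < eta_inv t.
Proof.
  intros Hs Hst. unfold eta_inv. apply Ropp_lt_contravar, ln_increasing; [apply F_pos; lra|].
  apply F_decr; assumption.
Qed.

Lemma eta_inv_ge (u : R) : 0 <= u -> eta_inv 0 <= eta_inv u.
Proof.
  intros Hu. destruct (Req_dec u 0) as [->|Hne]; [lra|]. left. apply eta_inv_incr; lra.
Qed.

Lemma exp_g_derive (u : R) : 0 <= u -> is_derive_from 0 (fun t => exp (g t)) u (exp (g u) * g1 u).
Proof.
  intros Hu. apply is_derive_from_comp; [apply derivable_pt_lim_exp|].
  apply has_deriv_from_is_derive_from; assumption.
Qed.

Lemma eta_inv_derive (u : R) : 0 <= u -> is_derive_from 0 eta_inv u (/ F_over_f g u).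
Proof.
  intros Hu. assert (HF := F_pos u Hu).
  eapply is_derive_from_eq_deriv; [|apply is_derive_from_opp, is_derive_from_comp;
    [apply derivable_pt_lim_ln, HF | apply F_derive, Hu]].
  unfold F_over_f. field. split; [lra | apply Rgt_not_eq, exp_pos].
Qed.

Lemma F_over_f_derive (u : R) : 0 <= u ->
  is_derive_from 0 (F_over_f g) u (g1 u * F_over_f g u - 1).
Proof.
  intros Hu.
  eapply is_derive_from_eq_deriv;
    [|apply is_derive_from_mult; [apply exp_g_derive | apply F_derive]; exact Hu].
  unfold F_over_f. field. apply Rgt_not_eq, exp_pos.
Qed.

Lemma h_du_derive (u : R) : 0 <= u ->
  is_derive_from 0 (fun t => 1 - g1 t * F_over_f g t) u (h_du (g1 u) (g2 u) (F_over_f g u)).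
Proof.
  intros Hu.
  eapply is_derive_from_eq_deriv; [|apply is_derive_from_minus; [apply is_derive_from_const|
    apply is_derive_from_mult;
      [apply has_deriv_from_is_derive_from | apply F_over_f_derive]; eauto]].
  unfold h_du. ring.
Qed.

Lemma h1_du_derive (u : R) : 0 <= u ->
  is_derive_from 0 (fun t => F_over_f g t * h_du (g1 t) (g2 t) (F_over_f g t)) u
    (h1_du (g1 u) (g2 u) (g3 u) (F_over_f g u)).
Proof.
  intros Hu. assert (dg1 := has_deriv_from_is_derive_from _ _ _ u g1_deriv Hu).
  assert (dg2 := has_deriv_from_is_derive_from _ _ _ u g2_deriv Hu).
  assert (dphi := F_over_f_derive u Hu).
  assert (dsum : is_derive_from 0 (fun t => g2 t + g1 t ^ 2) u (g3 u + 2 * g1 u * g2 u)).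
  { eapply is_derive_from_eq_deriv; [|apply is_derive_from_plus; [exact dg2|
      apply (is_derive_from_comp _ (fun z => z ^ 2)); [apply derivable_pt_lim_pow | exact dg1]]].
    simpl. ring. }
  unfold h_du.
  eapply is_derive_from_eq_deriv; [|apply is_derive_from_mult; [exact dphi|
    apply is_derive_from_minus; [exact dg1 | apply is_derive_from_mult; [exact dsum|exact dphi]]]].
  unfold h1_du, h_du. ring.
Qed.

Variables f1 eta h h1 h2 : R -> R.
Hypothesis f1_deriv : has_deriv_from 0 (f_of g) f1.
Hypothesis eta_spec : forall y, eta_inv 0 <= y -> 0 <= eta y /\ F_of g (eta y) = exp (- y).
Hypothesis h_spec : forall y, eta_inv 0 <= y -> h y = 1 - f1 (eta y) * F_of g (eta y).
Hypothesis h_deriv : has_deriv_from (eta_inv 0) h h1.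
Hypothesis h1_deriv : has_deriv_from (eta_inv 0) h1 h2.

Lemma eta_eta_inv (u : R) : 0 <= u -> eta (eta_inv u) = u.
Proof.
  intros Hu. destruct (eta_spec (eta_inv u) (eta_inv_ge u Hu)) as [Heta HF].
  assert (exp_eta_inv : exp (- eta_inv u) = F_of g u)
    by (unfold eta_inv; rewrite Ropp_involutive, exp_ln by (apply F_pos, Hu); reflexivity).
  rewrite exp_eta_inv in HF.
  destruct (Rtotal_order (eta (eta_inv u)) u) as [Hlt|[Heq|Hgt]]; [|exact Heq|].
  - assert (F_of g u < F_of g (eta (eta_inv u))) by (apply F_decr; assumption). lra.
  - assert (F_of g (eta (eta_inv u)) < F_of g u) by (apply F_decr; assumption). lra.
Qed.

Lemma h_eta_inv (u : R) : 0 <= u -> h (eta_inv u) = 1 - g1 u * F_over_f g u.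
Proof.
  intros Hu.
  assert (f1_eq : f1 u = exp (g u) * g1 u)
    by exact (is_derive_from_unique _ _ _ _ _ f1_deriv Hu (exp_g_derive u Hu)).
  rewrite h_spec by (apply eta_inv_ge, Hu).
  rewrite eta_eta_inv, f1_eq by exact Hu.
  unfold F_over_f. ring.
Qed.

Lemma h1_eta_inv (u : R) : 0 <= u ->
  h1 (eta_inv u) = F_over_f g u * h_du (g1 u) (g2 u) (F_over_f g u).
Proof.
  intros Hu.
  rewrite <- (has_deriv_from_chain eta_inv h h1 _ 0 (eta_inv 0) u _ _ Hu eta_inv_ge eta_inv_incr
                h_deriv h_eta_inv (eta_inv_derive u Hu) (h_du_derive u Hu)).
  field. apply Rgt_not_eq, F_over_f_gt0, Hu.
Qed.

Lemma h2_eta_inv (u : R) : 0 <= u ->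
  h2 (eta_inv u) = F_over_f g u * h1_du (g1 u) (g2 u) (g3 u) (F_over_f g u).
Proof.
  intros Hu.
  rewrite <- (has_deriv_from_chain eta_inv h1 h2 _ 0 (eta_inv 0) u _ _ Hu eta_inv_ge eta_inv_incr
                h1_deriv h1_eta_inv (eta_inv_derive u Hu) (h1_du_derive u Hu)).
  field. apply Rgt_not_eq, F_over_f_gt0, Hu.
Qed.

End Reparametrization.

Theorem lemma3p4 (g g1 g2 g3 f1 eta h h1 h2 : R -> R)
  (* g in C^3[0,oo) with g' = g1, g'' = g2, g''' = g3 *)
  (Hg1 : has_deriv_from 0 g g1)
  (Hg2 : has_deriv_from 0 g1 g2)
  (Hg3 : has_deriv_from 0 g2 g3)
  (Hg3c : cont_from 0 g3)
  (Hpos1 : forall u, 0 <= u -> 0 < g1 u)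
  (Hpos2 : forall u, 0 <= u -> 0 < g2 u)
  (Hc1 : forall u, 0 <= u -> 0 <= g1 u ^ 2 - g2 u)
  (Hc2 : forall u, 0 <= u -> 0 < 2 * g2 u ^ 2 - g1 u * g3 u)
  (* f1 = f' where f = e^g *)
  (Hf1 : has_deriv_from 0 (f_of g) f1)
  (* eta(y) = F^{-1}(e^{-y}) for y >= -log F(0) *)
  (Heta : forall y, - ln (F_of g 0) <= y ->
            0 <= eta y /\ F_of g (eta y) = exp (- y))
  (* h(y) = 1 - f'(eta y) F(eta y) *)
  (Hh : forall y, - ln (F_of g 0) <= y ->
          h y = 1 - f1 (eta y) * F_of g (eta y))
  (* h1 = h', h2 = h'' on [-log F(0), oo) *)
  (Hh1 : has_deriv_from (- ln (F_of g 0)) h h1)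
  (Hh2 : has_deriv_from (- ln (F_of g 0)) h1 h2)
  (* standing hypothesis: h' < 0 *)
  (Hneg : forall y, - ln (F_of g 0) <= y -> h1 y < 0) :
  forall y, - ln (F_of g 0) <= y -> h2 y / h1 y <= 4.
Proof.
  intros y Hy.
  destruct (Heta y Hy) as [Hu F_eta].
  set (u := eta y) in Hu, F_eta.
  assert (y_eq : eta_inv g u = y) by (unfold eta_inv; rewrite F_eta, ln_exp; ring).
  assert (h1_neg := Hneg y Hy).
  rewrite <- y_eq in h1_neg |- *.
  rewrite (h1_eta_inv g g1 g2 Hg1 Hg2 Hpos1 Hpos2 f1 eta h h1 Hf1 Heta Hh Hh1 u Hu) in *.
  rewrite (h2_eta_inv g g1 g2 g3 Hg1 Hg2 Hg3 Hpos1 Hpos2 f1 eta h h1 h2 Hf1 Heta Hh Hh1 Hh2 u Hu).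
  assert (g_tangent := g_above_tangent g g1 g2 Hg1 Hg2 Hpos2).
  apply h_ratio_le_4; auto.
  - apply (F_over_f_pos g g1); assumption.
  - apply (g1_F_over_f_le_1 g g1); assumption.
Qed.
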